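(* Let $\lambda>0$, $L>0$, and let $\{\{x_t(i)\}_{i\in[k]}\}_{t\in[T]}$ be any sequence with $x_t(i)\in\mathbb{R}^d$ and $\|x_t(i)\|_2\le L$ for all $i\in[k]$, $t\in[T]$. Let $V_0=\lambda I$ and $V_t=\lambda I+\sum_{s\in[t]}\sum_{i\in[k]}x_s(i)x_s(i)^\top$. Then $$\sum_{t\in[T]}\sum_{i\in[k]}\mathbb{1}\Big(\|x_t(i)\|_{V_{t-1}^{-1}}>1/\sqrt k\Big)\le 2dk\log\big(1+L^2kT/(d\lambda)\big).$$
   Context: For a positive definite matrix $A$ and vector $x$, $\|x\|_A=\sqrt{x^\top Ax}$; $[n]=\{1,\dots,n\}$. *)

From HB Require Import structures.
From mathcomp Require Import all_boot all_order all_algebra.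
From mathcomp Require Import all_classical all_reals all_analysis.
Set Implicit Arguments. Unset Strict Implicit. Unset Printing Implicit Defensive.
Import Order.TTheory GRing.Theory Num.Theory.
Local Open Scope ring_scope.

(* Gram matrix V_t = lambda I + sum_{s=1}^t sum_{i<k} x_s(i) x_s(i)^T,
   rounds are indexed 1..T (so V_0 = lambda I). *)
Definition gramV (R : realType) (d k : nat) (lam : R)
  (x : nat -> 'I_k -> 'cV[R]_d) (t : nat) : 'M[R]_d :=
  lam%:M + \sum_(1 <= s < t.+1) \sum_(i < k) (x s i *m (x s i)^T).

Definition mnorm (R : realType) (d : nat) (A : 'M[R]_d) (v : 'cV[R]_d) : R :=
  Num.sqrt (((v^T *m A *m v) : 'M[R]_1) ord0 ord0).

Definition norm2 (R : realType) (d : nat) (v : 'cV[R]_d) : R :=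
  Num.sqrt (\sum_(j < d) v j ord0 ^+ 2).

(* Let q_t = sum_i ||x_t(i)||^2_{V_{t-1}^-1}.  Every vector counted in round t has
   ||x_t(i)||^2_{V_{t-1}^-1} > 1/k, so the number m_t of counted vectors satisfies
   m_t / k <= min(1, q_t) <= 2 ln(1 + q_t).  Adding the k rank-one terms of round t
   multiplies the determinant by at least 1 + q_t: by the matrix determinant lemma
   det(V + u u^T) = det V (1 + ||u||^2_{V^-1}), and ||w||^2_{V^-1} <= (1 + ||u||^2_{V^-1})
   ||w||^2_{(V + u u^T)^-1}, which follows from ||w||^2_{A^-1} = max_y (2 y^T w - ||y||^2_A)
   and Cauchy-Schwarz.  Telescoping gives sum_t m_t <= 2k ln(det V_T / det V_0), and
   Hadamard's inequality with AM-GM gives det V_T <= (tr V_T / d)^d <= (lam + L^2 k T / d)^d. *)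

From HB Require Import structures.
From mathcomp Require Import all_boot all_order all_algebra.
From mathcomp Require Import all_classical all_reals all_analysis.
From mathcomp Require Import ring lra.
Set Implicit Arguments. Unset Strict Implicit. Unset Printing Implicit Defensive.
Import Order.TTheory GRing.Theory Num.Theory.
Local Open Scope ring_scope.

Section QuadraticForms.
Variable R : realFieldType.

Definition bform n (A : 'M[R]_n) (u v : 'cV[R]_n) : R := (u^T *m A *m v) 0 0.
Definition qform n (A : 'M[R]_n) (v : 'cV[R]_n) : R := bform A v v.
Definition posdef n (A : 'M[R]_n) := forall v, v != 0 -> 0 < qform A v.
Definition posemidef n (A : 'M[R]_n) := forall v, 0 <= qform A v.

Section Bilinear.
Variables (n : nat) (A : 'M[R]_n).

Lemma bformDl u1 u2 v : bform A (u1 + u2) v = bform A u1 v + bform A u2 v.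
Proof. by rewrite /bform linearD /= !mulmxDl mxE. Qed.

Lemma bformDr u v1 v2 : bform A u (v1 + v2) = bform A u v1 + bform A u v2.
Proof. by rewrite /bform !mulmxDr mxE. Qed.

Lemma bformZl c u v : bform A (c *: u) v = c * bform A u v.
Proof. by rewrite /bform linearZ /= -!scalemxAl mxE. Qed.

Lemma bformZr c u v : bform A u (c *: v) = c * bform A u v.
Proof. by rewrite /bform -!scalemxAr mxE. Qed.

Lemma bformC u v : A^T = A -> bform A u v = bform A v u.
Proof.
move=> sA; have tr11 (M : 'M[R]_1) : M 0 0 = M^T 0 0 by rewrite mxE.
by rewrite /bform tr11 !trmx_mul trmxK sA mulmxA.
Qed.

Lemma qformZ c v : qform A (c *: v) = c ^+ 2 * qform A v.
Proof. by rewrite /qform bformZl bformZr mulrA expr2. Qed.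

Lemma qform_comb a b u w : A^T = A ->
  qform A (a *: u + b *: w) = a ^+ 2 * qform A u + 2 * a * b * bform A u w + b ^+ 2 * qform A w.
Proof.
move=> sA; rewrite /qform !bformDl !bformDr !bformZl !bformZr (bformC w u sA).
by rewrite !expr2; ring.
Qed.

Lemma qform0 : qform A 0 = 0.
Proof. by rewrite /qform /bform mulmx0 mxE. Qed.

Lemma qform_mulmx m (P : 'M[R]_(n, m)) v : qform (P^T *m A *m P) v = qform A (P *m v).
Proof. by rewrite /qform /bform trmx_mul !mulmxA. Qed.

Lemma qform_delta i : qform A (delta_mx i 0) = A i i.
Proof. by rewrite /qform /bform trmx_delta -rowE -colE !mxE. Qed.

End Bilinear.

Lemma qformD n (A B : 'M[R]_n) v : qform (A + B) v = qform A v + qform B v.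
Proof. by rewrite /qform /bform mulmxDr mulmxDl mxE. Qed.

Lemma qform_sum n I (r : seq I) (F : I -> 'M[R]_n) v :
  qform (\sum_(i <- r) F i) v = \sum_(i <- r) qform (F i) v.
Proof.
elim: r => [|i r IH]; first by rewrite !big_nil /qform /bform mulmx0 mul0mx mxE.
by rewrite !big_cons qformD IH.
Qed.

Lemma qform_scalar n (c : R) (v : 'cV[R]_n) : qform c%:M v = c * \sum_j v j 0 ^+ 2.
Proof.
rewrite /qform /bform mul_mx_scalar -scalemxAl !mxE; congr (_ * _).
by apply: eq_bigr => j _; rewrite mxE expr2.
Qed.

Lemma qform_outer n (u v : 'cV[R]_n) : qform (u *m u^T) v = ((u^T *m v) 0 0) ^+ 2.
Proof.
rewrite /qform /bform mulmxA -mulmxA -[(_ *m u)]trmxK trmx_mul trmxK.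
by rewrite [LHS]mxE big_ord1 mxE expr2.
Qed.

Lemma qform_block_diag n1 n2 (A : 'M[R]_n1) (D : 'M[R]_n2) y :
  qform (block_mx A 0 0 D) (col_mx 0 y) = qform D y.
Proof. by rewrite /qform /bform tr_col_mx mul_row_block mul_row_col !mulmx0 !add0r. Qed.

Lemma posdef_posemidef n (A : 'M[R]_n) : posdef A -> posemidef A.
Proof. by move=> pA v; have [->|/pA/ltW//] := eqVneq v 0; rewrite qform0. Qed.

Lemma posdef_diag_gt0 n (A : 'M[R]_n) i : posdef A -> 0 < A i i.
Proof.
move=> pA; rewrite -qform_delta; apply: pA; apply/eqP => /matrixP /(_ i 0).
by rewrite !mxE !eqxx => /eqP; rewrite oner_eq0.
Qed.

Lemma posemidef_CauchySchwarz n (A : 'M[R]_n) u w : A^T = A -> posemidef A ->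
  bform A u w ^+ 2 <= qform A u * qform A w.
Proof.
move=> sA pA; set c := bform A u w; set qu := qform A u; set qw := qform A w.
have [qw0|qw_neq0] := eqVneq qw 0.
  suff -> : c = 0 by rewrite qw0 mulr0 expr0n.
  apply/eqP/negP => /negP c_neq0.
  (* along [w] the form is affine with slope [2 c], so it takes negative values *)
  have := pA (1 *: u + (- ((qu + 1) / (2 * c))) *: w).
  rewrite qform_comb // -/c -/qu -/qw qw0.
  rewrite (_ : _ + _ = -1) ?ler0N1 //; field; exact: c_neq0.
have qw_gt0 : 0 < qw by rewrite lt0r qw_neq0 pA.
have := pA (qw *: u + (- c) *: w); rewrite qform_comb // -/c -/qu -/qw.
rewrite (_ : _ + _ = qw * (qu * qw - c ^+ 2)); last by ring.
by rewrite pmulr_rge0 // subr_ge0.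
Qed.

Definition schur1 n (M : 'M[R]_(1 + n)) : 'M[R]_n :=
  drsubmx M - (ulsubmx M 0 0)^-1 *: (dlsubmx M *m ursubmx M).

Lemma det_schur1 n (M : 'M[R]_(1 + n)) : ulsubmx M 0 0 != 0 ->
  \det M = ulsubmx M 0 0 * \det (schur1 M).
Proof.
set a := ulsubmx M 0 0 => a0.
have LU : M = block_mx 1%:M 0 (a^-1 *: dlsubmx M) 1%:M *m block_mx a%:M (ursubmx M) 0 (schur1 M).
  rewrite mulmx_block !mul1mx !mul0mx !addr0 mul_mx_scalar scalerA mulfV // scale1r.
  by rewrite -scalemxAl /schur1 addrC subrK /a -mx11_scalar submxK.
by rewrite {1}LU det_mulmx det_lblock det_ublock !det1 det_scalar1 !mul1r.
Qed.

Section SymmetricSchur.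
Variables (n : nat) (M : 'M[R]_(1 + n)).
Hypothesis sM : M^T = M.

Let dlsubmx_sym : dlsubmx M = (ursubmx M)^T.
Proof. by rewrite trmx_ursub sM. Qed.

Lemma schur1_sym : (schur1 M)^T = schur1 M.
Proof.
rewrite /schur1 dlsubmx_sym linearB /= linearZ /= trmx_mul trmxK.
by rewrite trmx_drsub sM.
Qed.

Lemma schur1_diag_le i : 0 < ulsubmx M 0 0 -> schur1 M i i <= drsubmx M i i.
Proof.
move=> a_gt0; rewrite /schur1 dlsubmx_sym !mxE big_ord1 !mxE gerBl.
rewrite !mxE in a_gt0; by rewrite mulr_ge0 ?invr_ge0 ?(ltW a_gt0) // -expr2 sqr_ge0.
Qed.

Lemma posdef_schur1 : posdef M -> posdef (schur1 M).
Proof.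
move=> pM y y_neq0; set a := ulsubmx M 0 0; set b := ursubmx M.
have a_neq0 : a != 0.
  by apply: lt0r_neq0; rewrite /a !mxE; apply: posdef_diag_gt0.
pose P : 'M[R]_(1 + n) := block_mx 1%:M (- (a^-1 *: b)) 0 1%:M.
have PMP : P^T *m M *m P = block_mx a%:M 0 0 (schur1 M).
  rewrite -[in LHS](submxK M) dlsubmx_sym (mx11_scalar (ulsubmx M)) -/a -/b.
  rewrite /P tr_block_mx !trmx1 trmx0 mulmx_block !mul1mx !mul0mx !addr0.
  rewrite mul_mx_scalar linearN /= linearZ /= scalerN scalerA mulfV // scale1r.
  rewrite addNr mulNmx -scalemxAl (addrC (- _)) mulmx_block !mulmx1 !mulmx0 !mul0mx.
  rewrite !addr0 !add0r mul_scalar_mx scalerN scalerA mulfV // scale1r addNr.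
  by rewrite /schur1 dlsubmx_sym.
rewrite -(qform_block_diag (a%:M : 'M[R]_1)) -PMP qform_mulmx; apply: pM.
rewrite /P mul_block_col !mulmx0 !mul1mx !add0r; apply: contra y_neq0 => /eqP P0.
by rewrite -[y](col_mxKd (- (a^-1 *: b) *m y)) P0 linear0.
Qed.

End SymmetricSchur.

Lemma posdef_det_gt0_le_prod_diag n (M : 'M[R]_n) : M^T = M -> posdef M ->
  0 < \det M <= \prod_i M i i.
Proof.
elim: n M => [|n IH] M sM pM; first by rewrite det_mx00 big_ord0 ltr01 lexx.
pose M1 : 'M[R]_(1 + n) := M.
have a_gt0 : 0 < ulsubmx M1 0 0 by rewrite !mxE; apply: posdef_diag_gt0.
have /andP[S_gt0 S_le] := IH _ (schur1_sym sM) (posdef_schur1 sM pM).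
rewrite (det_schur1 (lt0r_neq0 a_gt0)) mulr_gt0 //= big_ord_recl.
have -> : ulsubmx M1 0 0 = M 0 0 by rewrite !mxE; congr (M _ _); apply/val_inj.
rewrite ler_pM2l ?(posdef_diag_gt0 _ pM) //; apply: le_trans S_le _.
apply: ler_prod => i _; rewrite ltW ?(posdef_diag_gt0 _ (posdef_schur1 sM pM)) //=.
have -> : lift ord0 i = rshift 1 i by apply/val_inj.
by apply: le_trans (schur1_diag_le sM i a_gt0) _; rewrite !mxE.
Qed.

Lemma posdef_unitmx n (A : 'M[R]_n) : A^T = A -> posdef A -> A \in unitmx.
Proof.
move=> sA pA; have /andP[det_gt0 _] := posdef_det_gt0_le_prod_diag sA pA.
by rewrite unitmxE unitfE lt0r_neq0.
Qed.

Lemma qform_invmx n (A : 'M[R]_n) v : A^T = A -> A \in unitmx ->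
  qform A (invmx A *m v) = qform (invmx A) v.
Proof. by move=> sA uA; rewrite -qform_mulmx trmx_inv sA mulVmx // mul1mx. Qed.

Lemma posemidef_invmx n (A : 'M[R]_n) : A^T = A -> posdef A -> posemidef (invmx A).
Proof.
by move=> sA pA v; rewrite -qform_invmx ?posdef_unitmx //; apply: posdef_posemidef.
Qed.

Lemma qform_invmx_ge n (A : 'M[R]_n) y w : A^T = A -> A \in unitmx -> posemidef A ->
  2 * (y^T *m w) 0 0 - qform A y <= qform (invmx A) w.
Proof.
move=> sA uA pA; have := pA (1 *: y + (-1) *: (invmx A *m w)).
rewrite qform_comb // qform_invmx // /bform mulmxA -(mulmxA y^T) mulmxV // mulmx1.
by rewrite !expr2; lra.
Qed.

Lemma det_1_add_mul_tr n (a b : 'cV[R]_n) : \det (1%:M + a *m b^T) = 1 + (b^T *m a) 0 0.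
Proof.
have E1 : (block_mx 1%:M b^T (- a) 1%:M : 'M[R]_(1 + n)) =
    block_mx 1%:M 0 (- a) 1%:M *m block_mx 1%:M b^T 0 (1%:M + a *m b^T).
  by rewrite mulmx_block !mul1mx !mul0mx !mulmx1 !addr0 mulNmx addrCA addNr addr0.
have E2 : (block_mx 1%:M b^T (- a) 1%:M : 'M[R]_(1 + n)) =
    block_mx (1%:M + b^T *m a) b^T 0 1%:M *m block_mx 1%:M 0 (- a) 1%:M.
  by rewrite mulmx_block !mul1mx !mul0mx !mulmx1 !mulmx0 !add0r mulmxN addrK.
have := congr1 determinant E1; rewrite E2 !det_mulmx det_lblock !det_ublock !det1.
by rewrite det_mx11 !mxE !mul1r !mulr1 => <-.
Qed.

Section RankOneUpdate.
Variables (n : nat) (V : 'M[R]_n) (u : 'cV[R]_n).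

Lemma det_add_outer : V \in unitmx ->
  \det (V + u *m u^T) = \det V * (1 + qform (invmx V) u).
Proof.
move=> uV; have -> : V + u *m u^T = V *m (1%:M + (invmx V *m u) *m u^T).
  by rewrite mulmxDr mulmx1 !mulmxA mulmxV // mul1mx.
by rewrite det_mulmx det_1_add_mul_tr /qform /bform mulmxA.
Qed.

Lemma add_outer_sym : V^T = V -> (V + u *m u^T)^T = V + u *m u^T.
Proof. by move=> sV; rewrite linearD /= trmx_mul trmxK sV. Qed.

Lemma posdef_add_outer : posdef V -> posdef (V + u *m u^T).
Proof.
move=> pV v v_neq0; rewrite qformD qform_outer.
by apply: lt_le_trans (pV v v_neq0) _; rewrite lerDl sqr_ge0.
Qed.

Lemma qform_invmx_add_outer w : V^T = V -> posdef V ->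
  qform (invmx V) w <= (1 + qform (invmx V) u) * qform (invmx (V + u *m u^T)) w.
Proof.
move=> sV pV; set V' := V + u *m u^T.
have sV' : V'^T = V' := add_outer_sym sV.
have pV' : posdef V' := posdef_add_outer pV.
have uV := posdef_unitmx sV pV.
set qu := qform (invmx V) u; set qw := qform (invmx V) w.
set c := bform (invmx V) u w; set Q := qform (invmx V') w.
have qu_ge0 : 0 <= qu by apply: posemidef_invmx.
have CS : c ^+ 2 <= qu * qw.
  by apply: posemidef_CauchySchwarz; rewrite ?trmx_inv ?sV //; apply: posemidef_invmx.
have qu1_gt0 : 0 < 1 + qu by rewrite ltr_wpDr.
set t := (1 + qu)^-1.
have e1 : ((t *: (invmx V *m w))^T *m w) 0 0 = t * qw.
  by rewrite linearZ /= -scalemxAl mxE trmx_mul trmx_inv sV.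
have e2 : qform V' (t *: (invmx V *m w)) = t ^+ 2 * qw + (t * c) ^+ 2.
  by rewrite qformD qform_outer qformZ qform_invmx // -scalemxAr mxE mulmxA.
have := qform_invmx_ge (t *: (invmx V *m w)) w sV' (posdef_unitmx sV' pV')
  (posdef_posemidef pV').
rewrite e1 e2 => /(ler_wpM2l (ltW qu1_gt0)); apply: le_trans.
have -> : (1 + qu) * (2 * (t * qw) - (t ^+ 2 * qw + (t * c) ^+ 2)) = 2 * qw - t * qw - t * c ^+ 2.
  by rewrite /t; field; rewrite lt0r_neq0.
have tqw : t * qw + t * (qu * qw) = qw by rewrite /t; field; rewrite lt0r_neq0.
have : t * c ^+ 2 <= t * (qu * qw) by rewrite ler_pM2l ?invr_gt0.
lra.
Qed.

End RankOneUpdate.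

Lemma det_add_sum_outer_ge n (V : 'M[R]_n) I (r : seq I) (u : I -> 'cV[R]_n) :
  V^T = V -> posdef V ->
  \det V * (1 + \sum_(i <- r) qform (invmx V) (u i)) <= \det (V + \sum_(i <- r) u i *m (u i)^T).
Proof.
elim: r V => [|i r IH] V sV pV; first by rewrite !big_nil !addr0 mulr1.
rewrite !big_cons (addrA V).
apply: le_trans (IH _ (add_outer_sym (u i) sV) (posdef_add_outer (u i) pV)).
have /andP[det_gt0 _] := posdef_det_gt0_le_prod_diag sV pV.
rewrite det_add_outer ?posdef_unitmx // -mulrA ler_pM2l // mulrDr mulr1 addrA lerD2l.
by rewrite mulr_sumr; apply: ler_sum => j _; apply: qform_invmx_add_outer.
Qed.

End QuadraticForms.

Lemma le_2ln1D (R : realType) (a q : R) : 0 <= a <= 1 -> a <= q -> a <= 2 * ln (1 + q).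
Proof.
case/andP=> a_ge0 a_le1 a_le_q; have a1_gt0 : 0 < 1 + a by lra.
have ln_ge : 1 - (1 + a)^-1 <= ln (1 + a).
  have inv_gtN1 : -1 < (1 + a)^-1 - 1 by rewrite ltrBrDr addNr invr_gt0.
  by have := le_ln1Dx inv_gtN1; rewrite subrKC lnV ?posrE //; lra.
have inv_le : (1 + a)^-1 <= 1 - a / 2 by rewrite -div1r ler_pdivrMr //; nra.
have : ln (1 + a) <= ln (1 + q) by rewrite ler_ln ?posrE ?lerD2l //; lra.
lra.
Qed.

Lemma large_indicator_le (R : rcfType) (k : nat) (q : R) : (0 < k)%N -> 0 <= q ->
  (if 1 / Num.sqrt k%:R < Num.sqrt q then 1 else 0) <= k%:R * q.
Proof.
move=> k_gt0 q_ge0; case: ifP => [|_]; last by rewrite mulr_ge0 ?ler0n.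
rewrite ltr_pdivrMr ?sqrtr_gt0 ?ltr0n // -sqrtrM // mulrC => s_gt1.
rewrite -(sqr_sqrtr (mulr_ge0 (ler0n _ k) q_ge0)) expr2; apply/ltW/(lt_trans s_gt1).
by rewrite ltr_pMr ?(lt_trans ltr01 s_gt1).
Qed.

Lemma mxtrace_outer (R : realType) n (u : 'cV[R]_n) : \tr (u *m u^T) = norm2 u ^+ 2.
Proof.
rewrite mxtrace_mulC trace_mx11 mxE sqr_sqrtr ?sumr_ge0 // => [|j _]; last exact: sqr_ge0.
by apply: eq_bigr => j _; rewrite mxE expr2.
Qed.

Lemma mnormE (R : realType) n (A : 'M[R]_n) v : mnorm A v = Num.sqrt (qform A v).
Proof. by []. Qed.

Section GramMatrix.
Variables (R : realType) (d k : nat) (lam : R) (x : nat -> 'I_k -> 'cV[R]_d).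
Hypothesis lam_gt0 : 0 < lam.
Local Notation V := (gramV lam x).

Lemma gramV_sym t : (V t)^T = V t.
Proof.
rewrite /gramV linearD /= tr_scalar_mx linear_sum /=; congr (_ + _).
by apply: eq_bigr => s _; rewrite linear_sum; apply: eq_bigr => i _; rewrite /= trmx_mul trmxK.
Qed.

Lemma gramV_posdef t : posdef (V t).
Proof.
move=> v v_neq0; rewrite /gramV qformD qform_scalar qform_sum.
have sq_gt0 : 0 < \sum_j v j 0 ^+ 2.
  rewrite lt_def psumr_eq0 => [|j _]; last exact: sqr_ge0.
  rewrite sumr_ge0 ?andbT => [|j _]; last exact: sqr_ge0.
  apply: contra v_neq0 => /allP v0; apply/eqP/matrixP => i j; rewrite (ord1 j) mxE.
  by apply/eqP; rewrite -sqrf_eq0; apply: v0; rewrite mem_index_enum.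
apply: lt_le_trans (mulr_gt0 lam_gt0 sq_gt0) _; rewrite lerDl.
by apply: sumr_ge0 => s _; rewrite qform_sum; apply: sumr_ge0 => i _; rewrite qform_outer sqr_ge0.
Qed.

Lemma det_gramV_gt0 t : 0 < \det (V t).
Proof. by case/andP: (posdef_det_gt0_le_prod_diag (gramV_sym t) (gramV_posdef t)). Qed.

Lemma gramVS t : V t.+1 = V t + \sum_(i < k) x t.+1 i *m (x t.+1 i)^T.
Proof. by rewrite /gramV big_nat_recr //= addrA. Qed.

Lemma det_gramV0 : \det (V 0) = lam ^+ d.
Proof. by rewrite /gramV big_geq // addr0 det_scalar. Qed.

Definition nlarge t : R :=
  \sum_(i < k) (if 1 / Num.sqrt k%:R < mnorm (invmx (V t.-1)) (x t i) then 1 else 0).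

Lemma nlargeS_le_logdet t : nlarge t.+1 <= 2 * k%:R * (ln (\det (V t.+1)) - ln (\det (V t))).
Proof.
have [k0|k_gt0] := posnP k.
  rewrite /nlarge big1 => [|i]; last by have := leq_trans (ltn_ord i) (eq_leq k0).
  have -> : (k%:R : R) = 0 by rewrite k0.
  by rewrite mulr0 mul0r.
set Q := \sum_(i < k) qform (invmx (V t)) (x t.+1 i).
have qform_ge0 i : 0 <= qform (invmx (V t)) (x t.+1 i).
  exact: posemidef_invmx (gramV_sym t) (gramV_posdef t) _.
have k_pos : (0 : R) < k%:R by rewrite ltr0n.
have m_ge0 : 0 <= nlarge t.+1 by apply: sumr_ge0 => i _; case: ifP.
have le_k : nlarge t.+1 <= k%:R.
  by rewrite -[in leRHS](card_ord k) -sumr_const; apply: ler_sum => i _; case: ifP.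
have le_kQ : nlarge t.+1 <= k%:R * Q.
  by rewrite /Q mulr_sumr; apply: ler_sum => i _; rewrite mnormE large_indicator_le.
have Q1_gt0 : 0 < 1 + Q by rewrite ltr_wpDr ?sumr_ge0.
have det_le : \det (V t) * (1 + Q) <= \det (V t.+1).
  by rewrite gramVS; apply: det_add_sum_outer_ge (gramV_sym t) (gramV_posdef t).
have ln_le : ln (1 + Q) <= ln (\det (V t.+1)) - ln (\det (V t)).
  by rewrite lerBrDl -lnM ?posrE ?det_gramV_gt0 // ler_ln ?posrE ?mulr_gt0 ?det_gramV_gt0.
rewrite -[nlarge _](@divfK _ k%:R) ?lt0r_neq0 // mulrC (mulrC 2) -(mulrA k%:R) ler_pM2l //.
apply: le_trans (ler_wpM2l (ler0n _ 2) ln_le); apply: le_2ln1D; last by rewrite ler_pdivrMr // mulrC.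
by rewrite divr_ge0 ?ler0n //= ler_pdivrMr // mul1r.
Qed.

Lemma sum_nlarge_le_logdet T :
  \sum_(1 <= t < T.+1) nlarge t <= 2 * k%:R * (ln (\det (V T)) - ln (\det (V 0))).
Proof.
elim: T => [|T IH]; first by rewrite big_geq // subrr mulr0.
rewrite big_nat_recr //=; apply: le_trans (lerD IH (nlargeS_le_logdet T)) _.
by rewrite -mulrDr addrC addrA subrK.
Qed.

Section BoundedRounds.
Variables (L : R) (T : nat).
Hypothesis x_le : forall t i, (1 <= t <= T)%N -> norm2 (x t i) <= L.

Lemma mxtrace_gramV_le : \tr (V T) <= lam * d%:R + L ^+ 2 * k%:R * T%:R.
Proof.
rewrite /gramV mxtraceD mxtrace_scalar mulr_natr lerD2l.
have -> : L ^+ 2 * k%:R * T%:R = \sum_(1 <= s < T.+1) \sum_(i < k) L ^+ 2.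
  by rewrite sumr_const_nat sumr_const card_ord subn1 !mulr_natr.
rewrite raddf_sum; apply: ler_sum_nat => s /andP[s_ge1 s_le]; rewrite raddf_sum.
apply: ler_sum => i _; rewrite /= mxtrace_outer.
have norm_ge0 : 0 <= norm2 (x s i) := sqrtr_ge0 _.
by rewrite ler_pXn2r ?nnegrE ?(le_trans norm_ge0) ?x_le // s_ge1 -ltnS.
Qed.

Let bound_gt0 : 0 < lam + L ^+ 2 * k%:R * T%:R / d%:R.
Proof.
apply: ltr_wpDr lam_gt0.
by rewrite divr_ge0 ?ler0n // mulr_ge0 ?ler0n // mulr_ge0 ?ler0n ?sqr_ge0.
Qed.

Lemma det_gramV_le : (0 < d)%N -> \det (V T) <= (lam + L ^+ 2 * k%:R * T%:R / d%:R) ^+ d.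
Proof.
move=> d_gt0; have d_pos : (0 : R) < d%:R by rewrite ltr0n.
have /andP[_ hadamard] := posdef_det_gt0_le_prod_diag (gramV_sym T) (gramV_posdef T).
have diag_ge0 i : 0 <= V T i i := ltW (posdef_diag_gt0 i (gramV_posdef T)).
have AGM : \prod_i V T i i <= (\tr (V T) / d%:R) ^+ d.
  by have := (leif_AGM (A := predT) (fun i _ => diag_ge0 i)).1; rewrite card_ord.
have tr_ge0 : 0 <= \tr (V T) by apply: sumr_ge0 => i _.
apply: le_trans hadamard (le_trans AGM _).
rewrite ler_pXn2r ?nnegrE ?divr_ge0 ?ler0n ?(ltW bound_gt0) //.
rewrite ler_pdivrMr // mulrDl divfK ?lt0r_neq0 //.
exact: mxtrace_gramV_le.
Qed.

Lemma logdet_gramV_le : (0 < d)%N ->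
  ln (\det (V T)) - ln (\det (V 0)) <= d%:R * ln (1 + L ^+ 2 * k%:R * T%:R / (d%:R * lam)).
Proof.
move=> d_gt0; have -> : 1 + L ^+ 2 * k%:R * T%:R / (d%:R * lam) =
    (lam + L ^+ 2 * k%:R * T%:R / d%:R) / lam.
  by rewrite mulrDl divff ?lt0r_neq0 // invfM mulrA.
rewrite ln_div ?posrE // mulrBr det_gramV0 lnXn // !mulr_natl lerD2r -lnXn //.
by rewrite ler_ln ?posrE ?det_gramV_gt0 ?exprn_gt0 //; apply: det_gramV_le.
Qed.

End BoundedRounds.

End GramMatrix.

Unset Implicit Arguments.

Theorem lemma6 (R : realType) (d k T : nat) (lam L : R)
  (x : nat -> 'I_k -> 'cV[R]_d) :
  (0 < d)%N -> 0 < lam -> 0 < L ->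
  (forall t i, (1 <= t <= T)%N -> norm2 (x t i) <= L) ->
  (\sum_(1 <= t < T.+1) \sum_(i < k)
      (if (1 : R) / Num.sqrt (k%:R : R) < mnorm (invmx (gramV lam x t.-1)) (x t i) then 1 else 0 : R))
  <= 2 * d%:R * k%:R * ln (1 + L ^+ 2 * k%:R * T%:R / (d%:R * lam)).
Proof.
move=> d_gt0 lam_gt0 _ x_le.
apply: le_trans (sum_nlarge_le_logdet x lam_gt0 T) _.
rewrite (mulrAC 2 d%:R) -(mulrA (2 * k%:R)) ler_wpM2l ?mulr_ge0 ?ler0n //.
exact: logdet_gramV_le.
Qed.
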